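(* There is a universal constant $C$ such that for every prime $p$, every positive integer $k$, and every pair of distinct $g_0,g_1\in\mathbb{Z}_p$, there is a $k$-party, one-round, deterministic protocol for the $k$-party Sum-Distinguish problem over $\mathbb{Z}_p$ relative to $g_0,g_1$ with total communication complexity at most $k\log k + C\cdot k$.
   Context: Model: parties $P_1,\dots,P_k$ each hold an input $x_i\in\mathbb{Z}_p$; a coordinator (distinct from the parties) wants to compute $f(x_1,\dots,x_k)$. In a one-round protocol each party sends a single message (a bit string depending only on its own input and, for randomized protocols, shared public randomness) to the coordinator, who then outputs a value depending only on the received messages (and the public randomness); there is no other communication. The total communication complexity is the maximum over inputs of the total number of bits sent by all parties. Sum-Distinguish relative to distinct $g_0,g_1\in\mathbb{Z}_p$: the partial function $f$ with $f=1$ if $\sum_i x_i\equiv g_1 \pmod p$ and $f=0$ if $\sum_i x_i\equiv g_0\pmod p$ (undefined otherwise); the protocol must output the correct value on every input where $f$ is defined. $\log$ is base 2. *)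

From Stdlib Require Import Reals.
From mathcomp Require Import all_boot.

Set Implicit Arguments.
Unset Strict Implicit.
Unset Printing Implicit Defensive.

(* A k-party one-round deterministic protocol over Z_p (represented as 'I_p):
   party i sends the bit string  enc i (x i)  (depending only on its own input),
   the coordinator outputs  dec m  where m is the tuple of received messages. *)

Definition messages (k p : nat) (enc : 'I_k -> 'I_p -> seq bool)
  (x : {ffun 'I_k -> 'I_p}) : {ffun 'I_k -> seq bool} :=
  [ffun i => enc i (x i)].

Definition sum_distinguish_correct (k p : nat) (g0 g1 : 'I_p)
  (enc : 'I_k -> 'I_p -> seq bool) (dec : {ffun 'I_k -> seq bool} -> bool) :=
  forall x : {ffun 'I_k -> 'I_p},
    ((\sum_(i < k) (x i : nat)) %% p = g1 -> dec (messages enc x) = true) /\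
    ((\sum_(i < k) (x i : nat)) %% p = g0 -> dec (messages enc x) = false).

Definition total_comm (k p : nat) (enc : 'I_k -> 'I_p -> seq bool) : nat :=
  \max_(x : {ffun 'I_k -> 'I_p}) \sum_(i < k) size (enc i (x i)).

Definition log2 (x : R) : R := Rdiv (ln x) (ln 2).

From Stdlib Require Import Reals Lra.
From mathcomp Require Import all_boot zify.

(* Scale every input by a constant c with c (g1 - g0) = floor(p/2) mod p, and let
   each party send the m = floor(log k) + 3 leading bits of c x_i mod p, i.e.
   floor((c x_i mod p) 2^m / p).  Since 2^m >= 4k, the k rounding errors add up to
   at most p/4, so two inputs with equal messages have scaled sums within p/4 of
   each other modulo p, whereas sums g0 and g1 become about p/2 apart.  The
   coordinator may thus answer 1 iff some input with these messages sums to g1. *)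

Set Implicit Arguments.
Unset Strict Implicit.
Unset Printing Implicit Defensive.

Lemma ltn_add_of_divn_eq (m n d : nat) : 0 < d -> m %/ d = n %/ d -> m < n + d.
Proof.
move=> d_gt0 eq_div; apply: leq_trans (ltn_ceil m d_gt0) _.
by rewrite eq_div mulSn addnC leq_add2r leq_divM.
Qed.

Lemma sum_le_of_divn_eq (k p N : nat) (y y' : 'I_k -> nat) : 0 < p ->
  (forall i, y i * N %/ p = y' i * N %/ p) ->
  (\sum_(i < k) y i) * N <= (\sum_(i < k) y' i) * N + k * p.
Proof.
move=> p_gt0 eq_div; rewrite !big_distrl /=.
apply: (@leq_trans (\sum_(i < k) (y' i * N + p))).
  by apply: leq_sum => i _; exact/ltnW/ltn_add_of_divn_eq.
by rewrite big_split sum_nat_const card_ord.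
Qed.

Lemma mul4_leq_of_mul_leq (k N a b p : nat) :
  0 < k -> 4 * k <= N -> a * N <= b * N + k * p -> 4 * a <= 4 * b + p.
Proof.
move=> k_gt0 le_4k_N le_ab.
case: (leqP a b) => [le_a_b|lt_b_a]; first lia.
have: k * (4 * (a - b)) <= k * p.
  rewrite mulnCA (mulnC k) -mulnCA.
  apply: (@leq_trans ((a - b) * N)); first by rewrite leq_mul2l le_4k_N orbT.
  by rewrite mulnBl leq_subLR.
rewrite leq_pmul2l //; lia.
Qed.

Lemma modn_half_far (p a b : nat) : 1 < p ->
  4 * a <= 4 * b + p -> 4 * b <= 4 * a + p -> a = b + p./2 %[mod p] -> False.
Proof.
move=> p_gt1 le_ab le_ba; have halfp := odd_double_half p.
case: (leqP b a) => [le_b_a|lt_a_b].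
  rewrite -(subnKC le_b_a) => /eqP.
  by rewrite eqn_modDl !modn_small; lia.
rewrite -(subnKC (ltnW lt_a_b)) -addnA -{1}[a]addn0 => /eqP.
rewrite eqn_modDl eq_sym mod0n => /dvdnP [j ej].
by case: j ej => [|[|j]] ej; lia.
Qed.

Lemma exists_mul_modn (p e d : nat) : 0 < p -> coprime p e ->
  exists c, c * e = d %[mod p].
Proof.
move=> p_gt0 co_pe; have [a _] := Bezoutl e p_gt0.
rewrite (eqP co_pe) => dvd_p.
have inv : (p - 1) * a * e = 1 %[mod p].
  apply/eqP; rewrite -(eqn_modDl (p - 1)) -{1}[p - 1]muln1 -mulnA -mulnDr.
  by rewrite subnK // -modnMmr (eqP dvd_p) muln0 mod0n modnn.
by exists (d * ((p - 1) * a)); rewrite -mulnA -modnMmr inv modnMmr muln1.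
Qed.

Lemma exists_shift_modn (p a b d : nat) : prime p -> a < p -> b < p -> a != b ->
  exists c, c * b = c * a + d %[mod p].
Proof.
move=> p_pr lt_a_p lt_b_p neq_ab; have p_gt0 := prime_gt0 p_pr.
have co : coprime p (b + p - a).
  rewrite prime_coprime //; apply/negP => /dvdnP [j ej].
  by case: j ej => [|[|j]] ej; lia.
have [c hc] := exists_mul_modn d p_gt0 co.
exists c; rewrite -modnDmr -hc modnDmr -mulnDr subnKC; last lia.
by rewrite mulnDr -modnDmr modnMl addn0.
Qed.

Fixpoint bits (m n : nat) : seq bool :=
  if m is m'.+1 then odd n :: bits m' n./2 else [::].

Lemma size_bits m n : size (bits m n) = m.
Proof. by elim: m n => [|m IHm] n //=; rewrite IHm. Qed.

Lemma bits_inj m n n' : n < 2 ^ m -> n' < 2 ^ m -> bits m n = bits m n' -> n = n'.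
Proof.
elim: m n n' => [|m IHm] n n' /=; first by rewrite expn0; lia.
have := odd_double_half n; have := odd_double_half n'.
rewrite expnS => halfn' halfn lt_n lt_n' [eq_odd eq_bits].
rewrite -halfn -halfn' eq_odd (IHm n./2 n'./2) //; lia.
Qed.

Lemma INR_expn (b m : nat) : INR (b ^ m) = pow (INR b) m.
Proof. by elim: m => [|m IHm] //=; rewrite expnS -multE mult_INR IHm. Qed.

Lemma log2_ge_of_expn_le (k m : nat) : 0 < k -> 2 ^ m <= k -> Rle (INR m) (log2 (INR k)).
Proof.
move=> k_gt0 le_2m_k; have ln2_gt0 : Rlt 0 (ln 2) by have := ln_lt_2; lra.
apply: Rnot_lt_le => lt_log; move: le_2m_k; apply/negP; rewrite -ltnNge.
apply/ltP/INR_lt; apply: ln_lt_inv; first by apply/lt_0_INR/ltP.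
  by rewrite INR_expn; apply: pow_lt; simpl; lra.
rewrite INR_expn ln_pow; last by simpl; lra.
move: lt_log; rewrite /log2 /Rdiv => lt_log.
have := Rmult_lt_compat_r _ _ _ ln2_gt0 lt_log.
by rewrite Rmult_assoc Rinv_l ?Rmult_1_r; [simpl | lra].
Qed.

Lemma INR_mul_trunc_log2_le (k : nat) : 0 < k ->
  Rle (INR (k * (trunc_log 2 k).+3))
      (Rplus (Rmult (INR k) (log2 (INR k))) (Rmult (INR 3) (INR k))).
Proof.
move=> k_gt0; have /andP [le_k _] := trunc_log_bounds (isT : 1 < 2) k_gt0.
have := Rmult_le_compat_l _ _ _ (pos_INR k) (log2_ge_of_expn_le k_gt0 le_k).
by rewrite -multE mult_INR !S_INR /=; lra.
Qed.

Definition search_dec {k p : nat} (g1 : 'I_p) (enc : 'I_k -> 'I_p -> seq bool)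
    (msg : {ffun 'I_k -> seq bool}) : bool :=
  [exists x : {ffun 'I_k -> 'I_p},
     (messages enc x == msg) && ((\sum_(i < k) (x i : nat)) %% p == g1)].

Lemma search_dec_correct (k p : nat) (g0 g1 : 'I_p) (enc : 'I_k -> 'I_p -> seq bool) :
  (forall x x' : {ffun 'I_k -> 'I_p},
     (\sum_(i < k) (x i : nat)) %% p = g0 -> (\sum_(i < k) (x' i : nat)) %% p = g1 ->
     messages enc x <> messages enc x') ->
  sum_distinguish_correct g0 g1 enc (search_dec g1 enc).
Proof.
move=> separates x; split=> sum_x.
  by apply/existsP; exists x; rewrite eqxx sum_x eqxx.
apply/existsP => -[x' /andP [/eqP eq_msg /eqP sum_x']].
exact: separates sum_x sum_x' (esym eq_msg).
Qed.

Lemma total_comm_const (k p m : nat) (enc : 'I_k -> 'I_p -> seq bool) :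
  (forall i xi, size (enc i xi) = m) -> total_comm enc <= k * m.
Proof.
move=> size_enc; apply/bigmax_leqP => x _.
by rewrite (eq_bigr (fun _ => m)) ?sum_nat_const ?card_ord // => i _.
Qed.

Definition quantize (p m c x : nat) : nat := (c * x %% p) * 2 ^ m %/ p.

Lemma quantize_lt (p m c x : nat) : 0 < p -> quantize p m c x < 2 ^ m.
Proof. by move=> p_gt0; rewrite ltn_divLR // mulnC ltn_pmul2l ?expn_gt0 ?ltn_pmod. Qed.

Lemma quantize_separates (k p m c : nat) (x x' : 'I_k -> nat) :
  1 < p -> 0 < k -> 4 * k <= 2 ^ m ->
  c * (\sum_(i < k) x' i) = c * (\sum_(i < k) x i) + p./2 %[mod p] ->
  (forall i, quantize p m c (x i) = quantize p m c (x' i)) -> False.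
Proof.
move=> p_gt1 k_gt0 le_4k shift eq_q; have p_gt0 : 0 < p by lia.
pose y i := c * x i %% p; pose y' i := c * x' i %% p.
have sum_y : \sum_(i < k) y i = c * (\sum_(i < k) x i) %[mod p].
  by rewrite modn_summ big_distrr.
have sum_y' : \sum_(i < k) y' i = c * (\sum_(i < k) x' i) %[mod p].
  by rewrite modn_summ big_distrr.
have le_yy' := sum_le_of_divn_eq (y := y) (y' := y') p_gt0 eq_q.
have le_y'y := sum_le_of_divn_eq (y := y') (y' := y) p_gt0 (fun i => esym (eq_q i)).
apply: (modn_half_far p_gt1 (mul4_leq_of_mul_leq k_gt0 le_4k le_y'y)
                            (mul4_leq_of_mul_leq k_gt0 le_4k le_yy')).
by rewrite sum_y' shift -modnDml -sum_y modnDml.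
Qed.

Definition quantized_enc {k p : nat} (m c : nat) : 'I_k -> 'I_p -> seq bool :=
  fun _ xi => bits m (quantize p m c xi).

Lemma quantized_enc_separates (k p m c : nat) (x x' : {ffun 'I_k -> 'I_p}) :
  1 < p -> 0 < k -> 4 * k <= 2 ^ m ->
  c * (\sum_(i < k) (x' i : nat)) = c * (\sum_(i < k) (x i : nat)) + p./2 %[mod p] ->
  messages (quantized_enc m c) x <> messages (quantized_enc m c) x'.
Proof.
move=> p_gt1 k_gt0 le_4k shift eq_msg; have p_gt0 : 0 < p by lia.
apply: (quantize_separates p_gt1 k_gt0 le_4k shift) => i.
have := congr1 (fun msg : {ffun 'I_k -> seq bool} => msg i) eq_msg.
by rewrite !ffunE; apply: bits_inj; apply: quantize_lt.
Qed.

Theorem theorem3p3 :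
  exists C : R,
    forall (p k : nat), prime p -> (0 < k)%N ->
    forall g0 g1 : 'I_p, g0 <> g1 ->
    exists (enc : 'I_k -> 'I_p -> seq bool)
           (dec : {ffun 'I_k -> seq bool} -> bool),
      sum_distinguish_correct g0 g1 enc dec /\
      Rle (INR (total_comm enc)) (Rplus (Rmult (INR k) (log2 (INR k))) (Rmult C (INR k))).
Proof.
exists (INR 3) => p k p_pr k_gt0 g0 g1 neq_g.
pose m := (trunc_log 2 k).+3.
have le_4k : 4 * k <= 2 ^ m.
  have /andP [_ lt_k] := trunc_log_bounds (isT : 1 < 2) k_gt0.
  by move: lt_k; rewrite /m !expnS; lia.
have [c shift] : exists c, c * g1 = c * g0 + p./2 %[mod p].
  by apply: exists_shift_modn => //; apply/eqP => /val_inj.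
exists (quantized_enc m c), (search_dec g1 (quantized_enc m c)); split.
  apply: search_dec_correct => x x' sum_x sum_x'.
  apply: quantized_enc_separates; rewrite ?prime_gt1 //.
  rewrite -modnMmr sum_x' shift -modnDml -[in RHS]modnDml.
  by rewrite -(modnMmr c (\sum_(i < k) x i)) sum_x.
apply: Rle_trans (INR_mul_trunc_log2_le k_gt0); apply/le_INR/leP.
by apply: total_comm_const => i xi; rewrite size_bits.
Qed.
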